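(* Let $A\subseteq\mathbb{N}$ be infinite and coinfinite and let $Q=\{X\subseteq\mathbb{N}: X\triangle A \text{ is finite}\}$, a quantifier of type $\langle 1\rangle$. Then the set $\{X\subseteq\mathbb{N}: X\setminus A\text{... }\}$, precisely the set $\{X\subseteq\mathbb{N}: A\setminus X\text{ is finite}\}$, viewed as a subset of the logic space $X_\tau=2^{\mathbb{N}}$ for the signature $\tau$ consisting of one unary relation, is $\mathrm{Aut}(Q)$-invariant but not definable in $\mathscr{L}_{\omega_1\omega}(Q)$.
   Context: A quantifier of type $\langle k\rangle$ on $\mathbb{N}$ is a family $Q$ of subsets of $\mathbb{N}^k$. The logic $\mathscr{L}_{\omega_1\omega}(Q)$ extends $\mathscr{L}_{\omega_1\omega}$ (countable conjunctions/disjunctions, finite quantifier strings) by formulas $Qx\,\varphi(x,y)$, interpreted in a structure $M$ with universe $\mathbb{N}$ by $M\models Qx\,\varphi(x,b)$ iff $\{a:M\models\varphi(a,b)\}\in Q$. A permutation $f$ of $\mathbb{N}$ fixes $Q$ if $B\in Q\iff f(B)\in Q$ for all $B$, where $f(B)=\{f(b):b\in B\}$; $\mathrm{Aut}(Q)$ is the group of such permutations. A set $S\subseteq 2^\mathbb{N}$ (identified with structures $\langle\mathbb{N},X\rangle$ with one unary predicate $X$) is $\mathrm{Aut}(Q)$-invariant if $g(S)=S$ for all $g\in\mathrm{Aut}(Q)$, and definable in $\mathscr{L}_{\omega_1\omega}(Q)$ if there is a sentence $\varphi$ in the signature with one unary predicate such that $X\in S\iff\langle\mathbb{N},X\rangle\models\varphi$.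 *)

From Stdlib Require Import Arith.

Definition nset := nat -> Prop.

Definition finite_set (B : nset) : Prop := exists n, forall x, B x -> x < n.

Definition symdiff (X A : nset) : nset := fun n => (X n /\ ~ A n) \/ (A n /\ ~ X n).
Definition setminus (A X : nset) : nset := fun n => A n /\ ~ X n.
Definition compl (A : nset) : nset := fun n => ~ A n.

(* Quantifiers of type <1> on N: families of subsets of N. *)
Definition quant1 := nset -> Prop.

Definition is_perm (f : nat -> nat) : Prop :=
  (forall x y, f x = f y -> x = y) /\ (forall y, exists x, f x = y).

Definition img (f : nat -> nat) (B : nset) : nset := fun y => exists b, B b /\ f b = y.

Definition seteq (B C : nset) : Prop := forall n, B n <-> C n.

Definition fixes (f : nat -> nat) (Q : quant1) : Prop := forall B, Q B <-> Q (img f B).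

Definition in_Aut (Q : quant1) (f : nat -> nat) : Prop := is_perm f /\ fixes f Q.

Definition Aut_invariant (Q : quant1) (S : nset -> Prop) : Prop :=
  forall g, in_Aut Q g ->
    (forall Y, (exists X, S X /\ seteq (img g X) Y) <-> S Y).

(* Formulas of L_{omega_1 omega}(Q) in the signature with one unary predicate P,
   variables are natural numbers. *)
Inductive form : Type :=
| FP   : nat -> form
| FEq  : nat -> nat -> form
| FNeg : form -> form
| FAnd : (nat -> form) -> form
| FOr  : (nat -> form) -> form
| FEx  : nat -> form -> form
| FAll : nat -> form -> form
| FQ   : nat -> form -> form.

Definition upd (e : nat -> nat) (v a : nat) : nat -> nat :=
  fun w => if Nat.eqb w v then a else e w.

Fixpoint sat (Q : quant1) (X : nset) (e : nat -> nat) (phi : form) : Prop :=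
  match phi with
  | FP v => X (e v)
  | FEq u v => e u = e v
  | FNeg p => ~ sat Q X e p
  | FAnd fs => forall n, sat Q X e (fs n)
  | FOr fs => exists n, sat Q X e (fs n)
  | FEx v p => exists a, sat Q X (upd e v a) p
  | FAll v p => forall a, sat Q X (upd e v a) p
  | FQ v p => Q (fun a => sat Q X (upd e v a) p)
  end.

Fixpoint free (w : nat) (phi : form) : Prop :=
  match phi with
  | FP v => v = w
  | FEq u v => u = w \/ v = w
  | FNeg p => free w p
  | FAnd fs => exists n, free w (fs n)
  | FOr fs => exists n, free w (fs n)
  | FEx v p => v <> w /\ free w p
  | FAll v p => v <> w /\ free w p
  | FQ v p => v <> w /\ free w p
  end.

Definition sentence (phi : form) : Prop := forall w, ~ free w phi.

(* S is definable in L_{omega_1 omega}(Q) by a sentence (the assignment is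
   irrelevant for sentences; we use the constant 0 one). *)
Definition definable (Q : quant1) (S : nset -> Prop) : Prop :=
  exists phi, sentence phi /\ forall X, S X <-> sat Q X (fun _ => 0) phi.

From Stdlib Require Import Arith Lia List Classical IndefiniteDescription.
Import ListNotations.

(* An automorphism [g] of [Q] maps [A] (which is in [Q]) into [Q], so [g(A)] and
   [g^-1(A)] differ from [A] only finitely; hence [g] preserves "almost containing A".

   For non-definability, call [X] generic if [X ∩ A], [X \ A] and the complement of
   [X] are all infinite.  In pure L_{ω1ω}, any two infinite coinfinite sets are
   back-and-forth equivalent, even over finitely many parameters, as long as the
   fresh points agree on membership; so a formula [φ(x, b)] is constant on the
   elements of [X] beyond the parameters.  Its extension therefore contains almost
   all of [X \ A] or misses almost all of [X ∩ A], and is never in [Q].  On generic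
   [X] every [Q]-subformula is thus false and L_{ω1ω}(Q) collapses to L_{ω1ω},
   which cannot separate the generic sets [A ∪ C] and [D ∪ C] (with [C], [D] infinite
   halves of the complement of [A] and of [A]), although only the first almost
   contains [A]. *)

Definition infinite_set (B : nset) : Prop := forall n, exists x, n <= x /\ B x.

Lemma infinite_not_finite B : infinite_set B -> ~ finite_set B.
Proof.
  intros HB [n Hn]. destruct (HB n) as [x [Hnx Bx]].
  specialize (Hn x Bx). lia.
Qed.

Lemma not_finite_infinite B : ~ finite_set B -> infinite_set B.
Proof.
  intros HB n. apply NNPP. intro Hbounded. apply HB. exists n. intros x Bx.
  destruct (Nat.lt_ge_cases x n); [assumption|]. exfalso. eauto.
Qed.

Lemma infinite_set_mono B C : infinite_set B -> (forall x, B x -> C x) -> infinite_set C.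
Proof. intros HB HBC n. destruct (HB n) as [x [Hnx Bx]]. eauto. Qed.

Lemma finite_set_mono B C : finite_set B -> (forall x, C x -> B x) -> finite_set C.
Proof. intros [n Hn] HCB. exists n. auto. Qed.

Lemma finite_setminus_trans A B C :
  finite_set (setminus A B) -> finite_set (setminus B C) -> finite_set (setminus A C).
Proof.
  intros [m Hm] [n Hn]. exists (Nat.max m n). intros x [Ax nCx].
  destruct (classic (B x)) as [Bx | nBx].
  - specialize (Hn x (conj Bx nCx)). lia.
  - specialize (Hm x (conj Ax nBx)). lia.
Qed.

(** * Invariance *)

Definition preimg (g : nat -> nat) (B : nset) : nset := fun x => B (g x).

Definition almost (A : nset) : quant1 := fun X => finite_set (symdiff X A).

Lemma bounded_on_initial_segment (g : nat -> nat) n :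
  exists M, forall x, x < n -> g x < M.
Proof.
  induction n as [|n [M HM]]; [exists 0; lia|].
  exists (Nat.max M (S (g n))). intros x Hx.
  destruct (Nat.eq_dec x n) as [-> | Hxn]; [lia|].
  specialize (HM x ltac:(lia)). lia.
Qed.

Lemma finite_img g B : finite_set B -> finite_set (img g B).
Proof.
  intros [n Hn]. destruct (bounded_on_initial_segment g n) as [M HM].
  exists M. intros y [b [Bb <-]]. auto.
Qed.

Lemma injective_preimage_bounded (g : nat -> nat) :
  (forall x y, g x = g y -> x = y) -> forall n, exists K, forall x, g x < n -> x < K.
Proof.
  intros Hinj n. induction n as [|n [K HK]]; [exists 0; lia|].
  destruct (classic (exists x0, g x0 = n)) as [[x0 Hx0] | Hnot_hit].
  - exists (Nat.max K (S x0)). intros x Hx.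
    destruct (Nat.eq_dec (g x) n) as [Hgx | Hgx].
    + assert (x = x0) by (apply Hinj; congruence). lia.
    + specialize (HK x ltac:(lia)). lia.
  - exists K. intros x Hx.
    destruct (Nat.eq_dec (g x) n) as [Hgx | Hgx]; [exfalso; eauto | apply HK; lia].
Qed.

Lemma finite_preimg g B :
  (forall x y, g x = g y -> x = y) -> finite_set B -> finite_set (preimg g B).
Proof.
  intros Hinj [n Hn]. destruct (injective_preimage_bounded g Hinj n) as [K HK].
  exists K. intros x Bgx. apply HK, Hn, Bgx.
Qed.

Lemma finite_setminus_img g A X :
  (forall x y, g x = g y -> x = y) ->
  finite_set (setminus A X) -> finite_set (setminus (img g A) (img g X)).
Proof.
  intros Hinj HAX. apply (finite_set_mono _ _ (finite_img g _ HAX)).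
  intros y [[a [Aa <-]] nXga]. exists a. repeat split; auto.
  intro Xa. apply nXga. exists a. auto.
Qed.

Lemma img_preimg g Y : (forall y, exists x, g x = y) -> seteq (img g (preimg g Y)) Y.
Proof.
  intros Hsurj y. split.
  - intros [x [Ygx <-]]. exact Ygx.
  - intro Yy. destruct (Hsurj y) as [x <-]. exists x. auto.
Qed.

Lemma almost_refl A : almost A A.
Proof. exists 0. unfold symdiff. tauto. Qed.

Lemma almost_seteq A B C : seteq B C -> almost A B -> almost A C.
Proof.
  intros HBC HB. apply (finite_set_mono _ _ HB). unfold symdiff.
  intro x. rewrite (HBC x). tauto.
Qed.

Lemma almost_setminus A X : almost A X -> finite_set (setminus A X).
Proof. intro HX. apply (finite_set_mono _ _ HX). intros x Hx. right. exact Hx. Qed.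

Lemma Aut_almost_img A g : in_Aut (almost A) g -> finite_set (setminus A (img g A)).
Proof. intros [_ Hfix]. apply almost_setminus, (proj1 (Hfix A)), almost_refl. Qed.

Lemma Aut_almost_preimg A g : in_Aut (almost A) g -> finite_set (setminus A (preimg g A)).
Proof.
  intros [[_ Hsurj] Hfix]. apply almost_setminus, (proj2 (Hfix (preimg g A))).
  apply (almost_seteq A A); [|apply almost_refl].
  intro y. symmetry. apply img_preimg, Hsurj.
Qed.

Lemma Aut_invariant_almost_supset A :
  Aut_invariant (almost A) (fun X => finite_set (setminus A X)).
Proof.
  intros g Hg Y. pose proof Hg as [[Hinj Hsurj] _]. split.
  - intros [X [HAX HXY]].
    apply (finite_set_mono (setminus A (img g X))).
    + apply (finite_setminus_trans _ _ _ (Aut_almost_img A g Hg)).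
      apply finite_setminus_img; assumption.
    + intros y [Ay nYy]. split; [exact Ay|]. intro Hy. apply nYy, HXY, Hy.
  - intro HAY. exists (preimg g Y). split.
    + apply (finite_setminus_trans _ _ _ (Aut_almost_preimg A g Hg)).
      exact (finite_preimg g _ Hinj HAY).
    + apply img_preimg, Hsurj.
Qed.

(** * Back and forth in L_{ω1ω} *)

(* Under the empty quantifier every [FQ] subformula is false, so [sat Qnone] is
   satisfaction in plain L_{ω1ω}. *)
Definition Qnone : quant1 := fun _ => False.

Definition partial_iso (X1 X2 : nset) (F : list nat) (e1 e2 : nat -> nat) : Prop :=
  (forall u, In u F -> (X1 (e1 u) <-> X2 (e2 u))) /\
  (forall u w, In u F -> In w F -> (e1 u = e1 w <-> e2 u = e2 w)).

Lemma partial_iso_sym {X1 X2 F e1 e2} :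
  partial_iso X1 X2 F e1 e2 -> partial_iso X2 X1 F e2 e1.
Proof. intros [HX He]. split; intros; symmetry; auto. Qed.

Lemma partial_iso_nil X1 X2 e1 e2 : partial_iso X1 X2 [] e1 e2.
Proof. split; intros; contradiction. Qed.

Lemma upd_eq e v a : upd e v a v = a.
Proof. unfold upd. rewrite Nat.eqb_refl. reflexivity. Qed.

Lemma upd_neq e v a w : w <> v -> upd e v a w = e w.
Proof. intro Hwv. unfold upd. apply Nat.eqb_neq in Hwv. rewrite Hwv. reflexivity. Qed.

Lemma in_cons_cases (u v : nat) F : In u (v :: F) -> u = v \/ (u <> v /\ In u F).
Proof.
  intros [<- | HuF]; [now left|].
  destruct (Nat.eq_dec u v); [now left | now right].
Qed.

Lemma partial_iso_cons X1 X2 F e1 e2 v a b :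
  partial_iso X1 X2 F e1 e2 -> (X1 a <-> X2 b) ->
  (forall u, In u F -> (e1 u = a <-> e2 u = b)) ->
  partial_iso X1 X2 (v :: F) (upd e1 v a) (upd e2 v b).
Proof.
  intros [HX He] Hab Hnew. split.
  - intros u Hu. destruct (in_cons_cases u v F Hu) as [-> | [Huv HuF]].
    + rewrite !upd_eq. exact Hab.
    + rewrite !upd_neq by exact Huv. auto.
  - intros u w Hu Hw.
    destruct (in_cons_cases u v F Hu) as [-> | [Huv HuF]],
             (in_cons_cases w v F Hw) as [-> | [Hwv HwF]];
      rewrite ?upd_eq, ?upd_neq by assumption.
    + tauto.
    + specialize (Hnew w HwF). split; intro; symmetry; apply Hnew; congruence.
    + auto.
    + auto.
Qed.

Lemma fresh_bound (e : nat -> nat) (F : list nat) : exists n, forall w, In w F -> e w < n.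
Proof.
  induction F as [|u F [n Hn]]; [exists 0; contradiction|].
  exists (Nat.max n (S (e u))). intros w [<- | HwF]; [lia|]. specialize (Hn w HwF). lia.
Qed.

Lemma partial_iso_extend X1 X2 F e1 e2 v a :
  infinite_set X2 -> infinite_set (compl X2) -> partial_iso X1 X2 F e1 e2 ->
  exists b, partial_iso X1 X2 (v :: F) (upd e1 v a) (upd e2 v b).
Proof.
  intros HX2 HcX2 Hiso. pose proof Hiso as [HX He].
  destruct (classic (exists w, In w F /\ e1 w = a)) as [[w [HwF <-]] | Hfresh].
  - exists (e2 w). apply partial_iso_cons; auto.
  - destruct (fresh_bound e2 F) as [n Hn].
    assert (Hb : exists b, n <= b /\ (X1 a <-> X2 b)).
    { destruct (classic (X1 a)).
      - destruct (HX2 n) as [b [Hnb X2b]]. exists b. tauto.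
      - destruct (HcX2 n) as [b [Hnb nX2b]]. exists b. unfold compl in nX2b. tauto. }
    destruct Hb as [b [Hnb Hab]]. exists b. apply partial_iso_cons; auto.
    intros u HuF. split; intro Hu; [exfalso; eauto | specialize (Hn u HuF); lia].
Qed.

Definition back_forth (P1 P2 : nat -> Prop) : Prop :=
  (forall a, exists b, P1 a <-> P2 b) /\ (forall b, exists a, P1 a <-> P2 b).

Lemma ex_iff_of_back_forth P1 P2 :
  back_forth P1 P2 -> ((exists a, P1 a) <-> (exists b, P2 b)).
Proof.
  intros [Hforth Hback]. split.
  - intros [a H1]. destruct (Hforth a) as [b Hb]. exists b. tauto.
  - intros [b H2]. destruct (Hback b) as [a Ha]. exists a. tauto.
Qed.

Lemma all_iff_of_back_forth P1 P2 :
  back_forth P1 P2 -> ((forall a, P1 a) <-> (forall b, P2 b)).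
Proof.
  intros [Hforth Hback]. split.
  - intros H1 b. destruct (Hback b) as [a Ha]. apply Ha, H1.
  - intros H2 a. destruct (Hforth a) as [b Hb]. apply Hb, H2.
Qed.

Lemma partial_iso_back_forth X1 X2 F e1 e2 v (R1 R2 : (nat -> nat) -> Prop) :
  infinite_set X1 -> infinite_set (compl X1) ->
  infinite_set X2 -> infinite_set (compl X2) ->
  partial_iso X1 X2 F e1 e2 ->
  (forall e1' e2', partial_iso X1 X2 (v :: F) e1' e2' -> (R1 e1' <-> R2 e2')) ->
  back_forth (fun a => R1 (upd e1 v a)) (fun b => R2 (upd e2 v b)).
Proof.
  intros HX1 HcX1 HX2 HcX2 Hiso HR. split.
  - intro a. destruct (partial_iso_extend X1 X2 F e1 e2 v a HX2 HcX2 Hiso) as [b Hb].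
    exists b. exact (HR _ _ Hb).
  - intro b.
    destruct (partial_iso_extend X2 X1 F e2 e1 v b HX1 HcX1 (partial_iso_sym Hiso))
      as [a Ha].
    exists a. exact (HR _ _ (partial_iso_sym Ha)).
Qed.

Lemma free_binder_cons v p F :
  (forall w, v <> w /\ free w p -> In w F) -> forall w, free w p -> In w (v :: F).
Proof. intros HF w Hw. destruct (Nat.eq_dec v w); [left | right; apply HF]; auto. Qed.

Lemma sat_none_partial_iso X1 X2 :
  infinite_set X1 -> infinite_set (compl X1) ->
  infinite_set X2 -> infinite_set (compl X2) ->
  forall phi F e1 e2, (forall w, free w phi -> In w F) -> partial_iso X1 X2 F e1 e2 ->
  (sat Qnone X1 e1 phi <-> sat Qnone X2 e2 phi).
Proof.
  intros HX1 HcX1 HX2 HcX2 phi.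
  induction phi as [v | u v | p IH | fs IH | fs IH | v p IH | v p IH | v p IH];
    intros F e1 e2 HF Hiso; simpl in HF |- *.
  - apply Hiso. auto.
  - apply Hiso; auto.
  - rewrite (IH F e1 e2 HF Hiso). tauto.
  - split; intros H n; apply (IH n F e1 e2); eauto.
  - split; intros [n H]; exists n; apply (IH n F e1 e2); eauto.
  - apply ex_iff_of_back_forth,
      (partial_iso_back_forth X1 X2 F e1 e2 v
         (fun e => sat Qnone X1 e p) (fun e => sat Qnone X2 e p)); auto.
    intros e1' e2'. apply IH, free_binder_cons, HF.
  - apply all_iff_of_back_forth,
      (partial_iso_back_forth X1 X2 F e1 e2 v
         (fun e => sat Qnone X1 e p) (fun e => sat Qnone X2 e p)); auto.
    intros e1' e2'. apply IH, free_binder_cons, HF.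
  - tauto.
Qed.

Lemma partial_iso_fresh X F e v a b n :
  (forall w, In w F -> e w < n) -> n <= a -> n <= b -> (X a <-> X b) ->
  partial_iso X X (v :: F) (upd e v a) (upd e v b).
Proof.
  intros Hn Ha Hb Hab. apply partial_iso_cons; [split; tauto | exact Hab |].
  intros u HuF. specialize (Hn u HuF). split; intro; lia.
Qed.

(** * Collapse of Q on generic sets *)

Definition generic (A X : nset) : Prop :=
  infinite_set (fun x => X x /\ A x) /\ infinite_set (fun x => X x /\ ~ A x) /\
  infinite_set (compl X).

Lemma generic_infinite_coinfinite A X :
  generic A X -> infinite_set X /\ infinite_set (compl X).
Proof.
  intros [HXA [_ HcX]]. split; [|exact HcX].
  apply (infinite_set_mono _ _ HXA). tauto.
Qed.

Lemma not_almost_of_eventually_constant A X (S : nset) n :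
  infinite_set (fun x => X x /\ A x) -> infinite_set (fun x => X x /\ ~ A x) ->
  (forall a b, n <= a -> n <= b -> X a -> X b -> (S a <-> S b)) -> ~ almost A S.
Proof.
  intros HXA HXnA Hconst [m Hm].
  destruct (HXA n) as [x0 [Hx0 [Xx0 Ax0]]].
  destruct (classic (S x0)) as [Sx0 | nSx0].
  - destruct (HXnA (Nat.max n m)) as [c [Hc [Xc nAc]]].
    assert (c < m).
    { apply Hm. left. split; [apply (Hconst x0 c); auto; lia | exact nAc]. }
    lia.
  - destruct (HXA (Nat.max n m)) as [d [Hd [Xd Ad]]].
    assert (d < m).
    { apply Hm. right. split; [exact Ad|]. intro Sd. apply nSx0, (Hconst x0 d); auto; lia. }
    lia.
Qed.

Lemma sat_almost_sat_none A X : generic A X ->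
  forall phi F e, (forall w, free w phi -> In w F) ->
  (sat (almost A) X e phi <-> sat Qnone X e phi).
Proof.
  intros HgX. pose proof HgX as [HXA [HXnA _]].
  destruct (generic_infinite_coinfinite A X HgX) as [HX HcX].
  intro phi.
  induction phi as [v | u v | p IH | fs IH | fs IH | v p IH | v p IH | v p IH];
    intros F e HF; simpl in HF |- *.
  - tauto.
  - tauto.
  - rewrite (IH F e HF). tauto.
  - split; intros H n; apply (IH n F e); eauto.
  - split; intros [n H]; exists n; apply (IH n F e); eauto.
  - split; intros [a Ha]; exists a; apply (IH (v :: F) _ (free_binder_cons v p F HF)), Ha.
  - split; intros H a; apply (IH (v :: F) _ (free_binder_cons v p F HF)), H.
  - unfold Qnone. split; [|tauto].
    destruct (fresh_bound e F) as [n Hn].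
    apply (not_almost_of_eventually_constant A X _ n HXA HXnA).
    intros a b Ha Hb Xa Xb.
    rewrite !(IH (v :: F) _ (free_binder_cons v p F HF)).
    apply (sat_none_partial_iso X X HX HcX HX HcX p (v :: F));
      [exact (free_binder_cons v p F HF) | apply (partial_iso_fresh X F e v a b n); tauto].
Qed.

Lemma definable_almost_generic A (S : nset -> Prop) X1 X2 :
  definable (almost A) S -> generic A X1 -> generic A X2 -> (S X1 <-> S X2).
Proof.
  intros [phi [Hsentence HS]] Hg1 Hg2.
  assert (Hclosed : forall w, free w phi -> In w []) by exact Hsentence.
  destruct (generic_infinite_coinfinite A X1 Hg1) as [HX1 HcX1].
  destruct (generic_infinite_coinfinite A X2 Hg2) as [HX2 HcX2].
  rewrite !HS, (sat_almost_sat_none A X1 Hg1 phi [] _ Hclosed),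
    (sat_almost_sat_none A X2 Hg2 phi [] _ Hclosed).
  apply (sat_none_partial_iso X1 X2 HX1 HcX1 HX2 HcX2 phi []);
    [exact Hclosed | apply partial_iso_nil].
Qed.

(** * Two generic sets on opposite sides *)

Fixpoint chain (g : nat -> nat) (k : nat) : nat :=
  match k with
  | 0 => g 0
  | S k => g (S (chain g k))
  end.

Lemma chain_ge g : (forall n, n <= g n) -> forall k, k <= chain g k.
Proof.
  intros Hg k. induction k as [|k IH]; simpl; [apply Hg|].
  specialize (Hg (S (chain g k))). lia.
Qed.

Lemma chain_increasing g : (forall n, n <= g n) -> forall i j, i < j -> chain g i < chain g j.
Proof.
  intros Hg i j Hij. induction Hij as [|j Hij IH]; simpl.
  - specialize (Hg (S (chain g i))). lia.
  - specialize (Hg (S (chain g j))). lia.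
Qed.

Lemma infinite_split B : infinite_set B ->
  exists C, (forall x, C x -> B x) /\ infinite_set C /\ infinite_set (setminus B C).
Proof.
  intros HB.
  destruct (functional_choice (fun n x => n <= x /\ B x) HB) as [g Hg].
  assert (Hinfl : forall n, n <= g n) by (intro n; apply Hg).
  assert (HBchain : forall k, B (chain g k)) by (intros [|k]; apply Hg).
  exists (fun x => exists k, x = chain g (2 * k)). repeat split.
  - intros x [k ->]. apply HBchain.
  - intro n. exists (chain g (2 * n)). pose proof (chain_ge g Hinfl (2 * n)).
    split; [lia | eauto].
  - intro n. exists (chain g (2 * n + 1)). pose proof (chain_ge g Hinfl (2 * n + 1)).
    split; [lia|]. split; [apply HBchain|]. intros [k Hk].
    destruct (Nat.lt_total (2 * n + 1) (2 * k)) as [Hlt | [Heq | Hgt]]; [| lia |].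
    + pose proof (chain_increasing g Hinfl _ _ Hlt). lia.
    + pose proof (chain_increasing g Hinfl _ _ Hgt). lia.
Qed.

Lemma generic_pair_separated A : infinite_set A -> infinite_set (compl A) ->
  exists X1 X2, generic A X1 /\ generic A X2 /\
    finite_set (setminus A X1) /\ ~ finite_set (setminus A X2).
Proof.
  intros HA HcA.
  destruct (infinite_split _ HcA) as [C [HCA [HC HcAC]]].
  destruct (infinite_split _ HA) as [D [HDA [HD HAD]]].
  assert (HAD_X2 : infinite_set (setminus A (fun x => D x \/ C x))).
  { apply (infinite_set_mono _ _ HAD). intros x [Ax nDx]. split; [exact Ax|].
    intros [Dx | Cx]; [auto | exact (HCA x Cx Ax)]. }
  exists (fun x => A x \/ C x), (fun x => D x \/ C x). repeat split.
  - apply (infinite_set_mono _ _ HA). tauto.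
  - apply (infinite_set_mono _ _ HC). intros x Cx. split; [now right | exact (HCA x Cx)].
  - apply (infinite_set_mono _ _ HcAC). intros x [nAx nCx] [Ax | Cx]; auto.
  - apply (infinite_set_mono _ _ HD). intros x Dx. split; [now left | exact (HDA x Dx)].
  - apply (infinite_set_mono _ _ HC). intros x Cx. split; [now right | exact (HCA x Cx)].
  - apply (infinite_set_mono _ _ HAD_X2). intros x [_ Hx]. exact Hx.
  - exists 0. intros x [Ax nX]. tauto.
  - apply infinite_not_finite, HAD_X2.
Qed.

Theorem mainTheorem5 (A : nset) :
  ~ finite_set A -> ~ finite_set (compl A) ->
  Aut_invariant (fun X => finite_set (symdiff X A)) (fun X => finite_set (setminus A X)) /\
  ~ definable (fun X => finite_set (symdiff X A)) (fun X => finite_set (setminus A X)).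
Proof.
  intros HA HcA. split.
  - exact (Aut_invariant_almost_supset A).
  - intro Hdef.
    apply not_finite_infinite in HA, HcA.
    destruct (generic_pair_separated A HA HcA) as [X1 [X2 [Hg1 [Hg2 [HX1 HX2]]]]].
    apply HX2, (definable_almost_generic A _ X1 X2 Hdef Hg1 Hg2), HX1.
Qed.
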